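(* Let $p$ be an odd prime and $F$ a positive integer with $p\mid F$. For all $s\in\mathbb Z_p$ and $a\in\mathbb Z_p^\times$, $$H_p(s,a,F)=H_p(s,F-a,F),$$ where $H_p(s,a,F)=\langle a\rangle^{1-s}\sum_{k=0}^\infty\binom{1-s}{k}\left(\frac Fa\right)^kE_k$.
   Context: The Euler numbers $E_k$ are defined by $\frac{2}{e^t+1}=\sum_{k\ge0}E_k\frac{t^k}{k!}$. For $a\in\mathbb Z_p^\times$, $\omega(a)$ is the Teichmüller character (the $(p-1)$-st root of unity congruent to $a$ mod $p$) and $\langle a\rangle=\omega^{-1}(a)a$. *)

(* p-adic integers are modelled as the inverse limit
   Z_p = lim Z/p^n Z: an element is a coherent sequence of integer
   approximations x n (meaningful modulo p^n), and two such sequences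
   denote the same p-adic integer iff they agree modulo p^n for every n. *)
From HB Require Import structures.
From mathcomp Require Import all_boot all_order all_algebra.
Set Implicit Arguments. Unset Strict Implicit. Unset Printing Implicit Defensive.
Import Order.TTheory GRing.Theory Num.Theory.
Local Open Scope ring_scope.

Definition padic := nat -> int.

Definition ppow (p n : nat) : int := (p ^ n)%N%:Z.

Definition coherent (p : nat) (x : padic) : Prop :=
  forall n, (x n.+1 = x n %[mod ppow p n])%Z.

Definition peq (p : nat) (x y : padic) : Prop :=
  forall n, (x n = y n %[mod ppow p n])%Z.

Definition punit (p : nat) (x : padic) : Prop := ~~ (p%:Z %| x 1%N)%Z.

Definition pconst (z : int) : padic := fun _ => z.
Definition padd (x y : padic) : padic := fun n => x n + y n.
Definition psub (x y : padic) : padic := fun n => x n - y n.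
Definition pmul (x y : padic) : padic := fun n => x n * y n.
Definition pexp (x : padic) (k : nat) : padic := fun n => x n ^+ k.

(* Euler numbers E_k, defined by 2/(e^t+1) = sum_k E_k t^k/k!.
   Comparing coefficients of t^n/n! in (e^t + 1) * sum_k E_k t^k/k! = 2 gives
   E_0 = 1 and  2 E_n + sum_{j<n} C(n,j) E_j = 0  for n >= 1. *)
Fixpoint euler_seq (n : nat) : seq rat :=
  match n with
  | 0 => [:: 1]
  | n'.+1 => let s := euler_seq n' in
      rcons s (- (\sum_(j < n'.+1) ('C(n'.+1, j))%:R * s`_j) / 2%:R)
  end.
Definition euler (k : nat) : rat := (euler_seq k)`_k.

(* w = omega(a): the (p-1)-st root of unity in Z_p congruent to a mod p *)
Definition IsTeich (p : nat) (a w : padic) : Prop :=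
  coherent p w /\ peq p (pexp w p.-1) (pconst 1) /\
  (w 1%N = a 1%N %[mod p%:Z])%Z.

(* l = <a> = omega(a)^{-1} a *)
Definition IsAngle (p : nat) (a l : padic) : Prop :=
  exists w, IsTeich p a w /\ coherent p l /\ peq p (pmul w l) a.

(* v = u^x for u in 1 + pZ_p and x in Z_p, defined by p-adic continuity:
   v = lim u^m as the natural numbers m tend p-adically to x *)
Definition IsPow (p : nat) (u x v : padic) : Prop :=
  coherent p v /\
  forall n, exists N, forall m : nat, (m%:Z = x N %[mod ppow p N])%Z ->
    (u n ^+ m = v n %[mod ppow p n])%Z.

Definition IsBinom (p : nat) (x : padic) (k : nat) (c : padic) : Prop :=
  coherent p c /\
  peq p (pmul (pconst (k`!)%:Z) c) (fun n => \prod_(i < k) (x n - i%:Z)).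

Definition IsRat (p : nat) (r : rat) (e : padic) : Prop :=
  coherent p e /\ peq p (pmul (pconst (denq r)) e) (pconst (numq r)).

Definition IsDiv (p : nat) (z : int) (a q : padic) : Prop :=
  coherent p q /\ peq p (pmul a q) (pconst z).

Definition IsSum (p : nat) (c : nat -> padic) (S : padic) : Prop :=
  coherent p S /\
  forall n, exists N, forall M, (N <= M)%N ->
    (\sum_(k < M) c k n = S n %[mod ppow p n])%Z.

Definition IsH (p : nat) (s a : padic) (F : nat) (h : padic) : Prop :=
  exists (l u q S : padic) (bin e : nat -> padic),
    IsAngle p a l /\
    IsPow p l (psub (pconst 1) s) u /\
    IsDiv p F%:Z a q /\
    (forall k, IsBinom p (psub (pconst 1) s) k (bin k)) /\
    (forall k, IsRat p (euler k) (e k)) /\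
    IsSum p (fun k => pmul (pmul (bin k) (pexp q k)) (e k)) S /\
    coherent p h /\
    peq p h (pmul u S).

Example euler_small :
  [/\ euler 0 = 1, euler 1 = - (1 / 2%:R), euler 2 = 0 & euler 3 = 1 / 4%:R].
Proof. by split; apply/eqP; rewrite /euler /= ?big_ord_recr /= ?big_ord0. Qed.

(* At a natural number m close p-adically to 1 - s, the defining series of
   H_p(s, a, F) becomes finite and <a>^m = omega(a)^-m a^m, so up to the unit
   (2 omega(a))^m, H_p(s, a, F) is congruent to the homogenised Euler polynomial
   2^m sum_k C(m,k) E_k F^k a^(m-k) (the factor 2^m clears the denominators of the
   E_k and is a unit since p is odd).  The generating-function identity
   E(-t) = 2 - E(t) makes this polynomial change by (-1)^m under a -> F - a, and
   p | F gives omega(F - a) = -omega(a), which produces the same sign.  Letting m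
   approach 1 - s yields the identity modulo every p^n. *)

From Stdlib Require Import Setoid Morphisms ClassicalEpsilon.
From HB Require Import structures.
From mathcomp Require Import all_boot all_order all_algebra.
From mathcomp Require Import ring lra zify.

Set Implicit Arguments. Unset Strict Implicit. Unset Printing Implicit Defensive.
Import Order.TTheory GRing.Theory Num.Theory.
Local Open Scope ring_scope.

Definition eqmodz (d x y : int) : Prop := (d %| x - y)%Z.

Lemma eqmodzP d x y : (x = y %[mod d])%Z <-> eqmodz d x y.
Proof. by rewrite /eqmodz -eqz_mod_dvd; split => [->|/eqP]. Qed.

Lemma eqmodz0 d x : eqmodz d x 0 <-> (d %| x)%Z.
Proof. by rewrite /eqmodz subr0. Qed.

#[local] Instance eqmodz_equiv d : Equivalence (eqmodz d).
Proof.
split=> [x | x y | x y z]; rewrite /eqmodz; first by rewrite subrr dvdz0.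
  by rewrite -opprB rpredN.
by move=> hxy hyz; rewrite -(subrKA y) rpredD.
Qed.

#[local] Hint Extern 0 (eqmodz _ _ _) => reflexivity : core.

#[local] Instance eqmodz_add d :
  Proper (eqmodz d ==> eqmodz d ==> eqmodz d) (@GRing.add int).
Proof. by move=> x x' hx y y' hy; rewrite /eqmodz opprD addrACA rpredD. Qed.

#[local] Instance eqmodz_opp d : Proper (eqmodz d ==> eqmodz d) (@GRing.opp int).
Proof. by move=> x x' hx; rewrite /eqmodz -opprD rpredN. Qed.

#[local] Instance eqmodz_mul d :
  Proper (eqmodz d ==> eqmodz d ==> eqmodz d) (@GRing.mul int).
Proof.
move=> x x' hx y y' hy; rewrite /eqmodz.
have -> : x * y - x' * y' = x * (y - y') + (x - x') * y' by ring.
by apply: rpredD; [apply: dvdz_mull | apply: dvdz_mulr].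
Qed.

#[local] Instance eqmodz_exp d :
  Proper (eqmodz d ==> eq ==> eqmodz d) (@GRing.exp int).
Proof.
move=> x x' hx k _ <-; elim: k => [|k IH]; first reflexivity.
by rewrite !exprS IH hx.
Qed.

Lemma eqmodz_sum d (I : Type) (r : seq I) (P : pred I) (f g : I -> int) :
  (forall i, P i -> eqmodz d (f i) (g i)) ->
  eqmodz d (\sum_(i <- r | P i) f i) (\sum_(i <- r | P i) g i).
Proof. by move=> hfg; apply: (big_ind2 (eqmodz d)) => // x1 x2 y1 y2 -> ->. Qed.

Lemma eqmodz_prod d (I : Type) (r : seq I) (P : pred I) (f g : I -> int) :
  (forall i, P i -> eqmodz d (f i) (g i)) ->
  eqmodz d (\prod_(i <- r | P i) f i) (\prod_(i <- r | P i) g i).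
Proof. by move=> hfg; apply: (big_ind2 (eqmodz d)) => // x1 x2 y1 y2 -> ->. Qed.

Definition ffactz (x : int) (k : nat) : int := \prod_(i < k) (x - i%:Z).

#[local] Instance eqmodz_ffactz d : Proper (eqmodz d ==> eq ==> eqmodz d) ffactz.
Proof. by move=> x y hxy k _ <-; apply: eqmodz_prod => i _; rewrite hxy. Qed.

Lemma ffactz_nat m k : ffactz m%:Z k = (m ^_ k)%N%:Z.
Proof.
elim: k => [|k IH]; first by rewrite /ffactz big_ord0.
rewrite /ffactz big_ord_recr /= -/(ffactz _ _) IH ffactnSr PoszM.
by case: (leqP k m) => hk; [rewrite subzn | rewrite ffact_small // !mul0r].
Qed.

Lemma eqmodz_dvd d d' x y : (d' %| d)%Z -> eqmodz d x y -> eqmodz d' x y.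
Proof. exact: dvdz_trans. Qed.

Lemma eqmodz_mul2l d c x y :
  coprimez d c -> eqmodz d (c * x) (c * y) -> eqmodz d x y.
Proof. by move=> hdc; rewrite /eqmodz -mulrBr Gauss_dvdzr. Qed.

Lemma eqmodz_nat (d m r : nat) : eqmodz d m r <-> (m = r %[mod d])%N.
Proof. by rewrite -eqmodzP !modz_nat; split=> [[]|->]. Qed.

Lemma eqmodz_absz_modz d z : d != 0 -> eqmodz d (absz (z %% d)%Z)%:Z z.
Proof. by move=> d0; apply/eqmodzP; rewrite gez0_abs ?modz_mod ?modz_ge0. Qed.

Lemma ppow_dvdz p m n : (m <= n)%N -> (ppow p m %| ppow p n)%Z.
Proof. by move=> h; rewrite /ppow dvdzE /= dvdn_exp2l. Qed.

Lemma ppow1 p : ppow p 1 = p%:Z.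
Proof. by rewrite /ppow expn1. Qed.

Lemma eqmodz_ppow0 p x y : eqmodz (ppow p 0) x y.
Proof. by rewrite /eqmodz /ppow expn0 dvd1z. Qed.

Lemma eqmodz_ppow_le p m n x y :
  (m <= n)%N -> eqmodz (ppow p n) x y -> eqmodz (ppow p m) x y.
Proof. by move=> hmn; apply: eqmodz_dvd (ppow_dvdz p hmn). Qed.

Lemma eqmodz_ppow_p p n x y :
  (0 < n)%N -> eqmodz (ppow p n) x y -> eqmodz p x y.
Proof. by rewrite -ppow1; apply: eqmodz_ppow_le. Qed.

Lemma coherentS p x n : coherent p x -> eqmodz (ppow p n) (x n.+1) (x n).
Proof. by move=> hx; apply/eqmodzP. Qed.

Lemma coherent_le p x m n :
  coherent p x -> (m <= n)%N -> eqmodz (ppow p m) (x n) (x m).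
Proof.
move=> hx; elim: n => [|n IH]; first by rewrite leqn0 => /eqP ->.
rewrite leq_eqVlt ltnS => /predU1P [-> //| hmn].
by rewrite -(IH hmn); apply: eqmodz_ppow_le hmn (coherentS n hx).
Qed.

Lemma peqP p x y n : peq p x y -> eqmodz (ppow p n) (x n) (y n).
Proof. by move=> h; apply/eqmodzP. Qed.

Lemma coherent_const p z : coherent p (pconst z).
Proof. by []. Qed.

Lemma coherent_sub p x y : coherent p x -> coherent p y -> coherent p (psub x y).
Proof. by move=> hx hy n; apply/eqmodzP; rewrite /psub !coherentS. Qed.

Lemma coherent_mul p x y : coherent p x -> coherent p y -> coherent p (pmul x y).
Proof. by move=> hx hy n; apply/eqmodzP; rewrite /pmul !coherentS. Qed.

Lemma coherent_exp p x k : coherent p x -> coherent p (pexp x k).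
Proof. by move=> hx n; apply/eqmodzP; rewrite /pexp coherentS. Qed.

Lemma coherent_choice p (P : nat -> int -> Prop) :
  (forall n, exists y, P n y) ->
  (forall n y y', P n y -> P n.+1 y' -> eqmodz (ppow p n) y' y) ->
  exists x, coherent p x /\ forall n, P n (x n).
Proof.
move=> /ClassicalEpsilon.choice [x hx] hc.
by exists x; split=> // n; apply/eqmodzP; apply: hc (hx n) (hx n.+1).
Qed.

Section PrimeModulus.

Variable p : nat.
Hypothesis p_prime : prime p.

Lemma ppow_neq0 n : ppow p n != 0.
Proof. by rewrite /ppow eqz_nat expn_eq0 negb_and -lt0n prime_gt0. Qed.

Lemma coprimez_ppow n c : ~~ (p%:Z %| c)%Z -> coprimez (ppow p n) c.
Proof.
move=> hc; rewrite coprimezE /ppow /=; case: n => [|n]; first exact: coprime1n.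
by rewrite coprime_pexpl // prime_coprime // -(dvdzE p%:Z).
Qed.

Lemma eqmodz_ppow_mul2l n c x y : ~~ (p%:Z %| c)%Z ->
  eqmodz (ppow p n) (c * x) (c * y) -> eqmodz (ppow p n) x y.
Proof. by move=> /(coprimez_ppow n); apply: eqmodz_mul2l. Qed.

Lemma eqmodz_ndvdz c c' : eqmodz p c c' -> ~~ (p%:Z %| c)%Z -> ~~ (p%:Z %| c')%Z.
Proof. by move=> h; apply: contra => hc'; rewrite -(subrK c' c) rpredD. Qed.

Lemma ndvdzM c c' : ~~ (p%:Z %| c)%Z -> ~~ (p%:Z %| c')%Z -> ~~ (p%:Z %| c * c')%Z.
Proof.
by move=> h h'; rewrite dvdzE abszM Euclid_dvdM // -!(dvdzE p%:Z) negb_or h h'.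
Qed.

Lemma ndvdz1 : ~~ (p%:Z %| 1)%Z.
Proof. by rewrite dvdzE dvdn1 neq_ltn prime_gt1 ?orbT. Qed.

Lemma ndvdzX c k : ~~ (p%:Z %| c)%Z -> ~~ (p%:Z %| c ^+ k)%Z.
Proof. by move=> h; elim: k => [|k IH]; rewrite ?ndvdz1 // exprS ndvdzM. Qed.

Lemma punit_at c n : coherent p c -> punit p c -> (0 < n)%N -> ~~ (p%:Z %| c n)%Z.
Proof.
move=> hc hu n0; apply: eqmodz_ndvdz hu.
by symmetry; rewrite -ppow1; exact: coherent_le hc n0.
Qed.

Lemma eqmodz_invz n c : ~~ (p%:Z %| c)%Z -> exists y, eqmodz (ppow p n) (c * y) 1.
Proof.
move=> /(coprimez_ppow n) /coprimezP [[u v] /= e]; exists v.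
rewrite /eqmodz -e (_ : c * v - _ = - u * ppow p n); last by ring.
exact: dvdz_mull.
Qed.

Lemma eqmodz_expp j x y : (0 < j)%N ->
  eqmodz (ppow p j) x y -> eqmodz (ppow p j.+1) (x ^+ p) (y ^+ p).
Proof.
move=> j0 hxy; rewrite /eqmodz subrXX /ppow expnSr PoszM dvdz_mul //.
have hxy1 := eqmodz_ppow_p j0 hxy.
apply/eqmodz0; rewrite (eqmodz_sum _ _ (g := fun i : 'I_p => y ^+ p.-1)); last first.
  move=> i _; rewrite hxy1 -exprD subnK //.
  by rewrite -ltnS prednK ?prime_gt0.
rewrite sumr_const card_ord; apply/eqmodz0.
by rewrite -mulr_natr natz dvdz_mull.
Qed.

Lemma eqmodz_expp_iter x y k :
  eqmodz p x y -> eqmodz (ppow p k.+1) (x ^+ (p ^ k)) (y ^+ (p ^ k)).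
Proof.
move=> hxy; elim: k => [|k IH]; first by rewrite ppow1 !expn0 !expr1.
by rewrite expnSr !exprM; apply: eqmodz_expp.
Qed.

Lemma fermatz b : ~~ (p%:Z %| b)%Z -> eqmodz p (b ^+ p.-1) 1.
Proof.
move=> hb; have p0 : p%:Z != 0 by rewrite eqz_nat -lt0n prime_gt0.
have hr := eqmodz_absz_modz b p0; set r := absz _ in hr.
have hbp : eqmodz p (b ^+ p) b.
  rewrite -hr (_ : r%:Z ^+ p = (r ^ p)%N%:Z); last by rewrite -!natz natrX.
  by apply/eqmodz_nat; apply: fermat_little.
apply: (@eqmodz_ppow_mul2l 1 b) => //; rewrite ppow1 mulr1 -exprS prednK //.
exact: prime_gt0.
Qed.

Lemma teich_expp n y : eqmodz (ppow p n) (y ^+ p.-1) 1 ->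
  forall k, eqmodz (ppow p n) (y ^+ (p ^ k)) y.
Proof.
move=> hy; elim=> [|k IH]; first by rewrite expn0 expr1.
rewrite expnSr exprM IH.
by rewrite -[in y ^+ p](prednK (prime_gt0 p_prime)) exprS hy mulr1.
Qed.

Lemma teich_uniq n y z : eqmodz (ppow p n) (y ^+ p.-1) 1 ->
  eqmodz (ppow p n) (z ^+ p.-1) 1 -> eqmodz p y z -> eqmodz (ppow p n) y z.
Proof.
case: n => [|k] hy hz hyz; first exact: eqmodz_ppow0.
transitivity (y ^+ (p ^ k)); first by symmetry; apply: teich_expp.
transitivity (z ^+ (p ^ k)); [exact: eqmodz_expp_iter | exact: teich_expp].
Qed.

(* b^(p^(n-1)) is the Teichmuller representative of b modulo p^n. *)
Lemma teich_approx n b : ~~ (p%:Z %| b)%Z ->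
  exists y, eqmodz (ppow p n) (y ^+ p.-1) 1 /\ eqmodz p y b.
Proof.
move=> hb; have hf := fermatz hb; exists (b ^+ (p ^ n.-1)); split.
  case: n => [|k]; first exact: eqmodz_ppow0.
  by rewrite -exprM mulnC exprM -(expr1n _ (p ^ k)); apply: eqmodz_expp_iter.
by rewrite -ppow1 teich_expp // ppow1.
Qed.

Lemma exists_teich a : coherent p a -> punit p a -> exists w, IsTeich p a w.
Proof.
move=> ha hu.
pose P n y := eqmodz (ppow p n) (y ^+ p.-1) 1 /\ eqmodz p y (a 1%N).
have [||w [hw hP]] := @coherent_choice p P; first by move=> n; apply: teich_approx.
  move=> n y y' [hy hya] [hy' hya']; apply: teich_uniq => //.
    exact: eqmodz_ppow_le (leqnSn n) hy'.
  by rewrite hya hya'.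
exists w; split=> //; split=> [n|]; apply/eqmodzP.
  exact: (hP n).1.
exact: (hP 1%N).2.
Qed.

Lemma exists_div c b : coherent p c -> coherent p b -> punit p c ->
  exists x, coherent p x /\ peq p (pmul c x) b.
Proof.
move=> hc hb hu; pose P n y := eqmodz (ppow p n) (c n * y) (b n).
have [||x [hx hP]] := @coherent_choice p P.
- case=> [|n]; first by exists 0; apply: eqmodz_ppow0.
  have [y hy] := eqmodz_invz n.+1 (punit_at hc hu (ltn0Sn n)).
  by exists (y * b n.+1); rewrite /P mulrA hy mul1r.
- case=> [|n] y y' hy hy'; first exact: eqmodz_ppow0.
  rewrite /P in hy hy'.
  apply: (eqmodz_ppow_mul2l (punit_at hc hu (ltn0Sn n))); rewrite hy.
  rewrite -(coherentS n.+1 hc) -(coherentS n.+1 hb).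
  exact: eqmodz_ppow_le (leqnSn _) hy'.
by exists x; split=> // n; apply/eqmodzP; apply: hP.
Qed.

(* The p-adic valuation of c is at most c. *)
Lemma eqmodz_ppow_mul2l_nat n (c : nat) y y' : (0 < c)%N ->
  eqmodz (ppow p (n + c)) (c%:Z * y) (c%:Z * y') -> eqmodz (ppow p n) y y'.
Proof.
move=> c0; rewrite /eqmodz -mulrBr /ppow !dvdzE abszM /=.
set D := absz _; case: (posnP D) => [->|D0]; first by rewrite dvdn0.
rewrite !pfactor_dvdn ?muln_gt0 ?c0 // lognM //.
suff : (logn p c <= c)%N by lia.
have hc : (p ^ logn p c <= c)%N by apply: dvdn_leq (pfactor_dvdnn p c).
by apply: leq_trans hc; apply: ltnW; apply: ltn_expl; apply: prime_gt1.
Qed.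

Lemma binom_approx x k c n N m : coherent p x -> IsBinom p x k c ->
  (n + k`! <= N)%N -> (m%:Z = x N %[mod ppow p N])%Z ->
  eqmodz (ppow p n) (c n) 'C(m, k)%:R.
Proof.
move=> hx [hc hck] hN /eqmodzP hm; set L := (n + k`!)%N.
rewrite -(coherent_le hc (leq_addr k`! n)) -/L natz.
apply: (@eqmodz_ppow_mul2l_nat _ k`!); first exact: fact_gt0.
have hcL := peqP L hck; rewrite /pmul /pconst in hcL.
rewrite hcL -/(ffactz (x L) k) -(coherent_le hx hN) -(eqmodz_ppow_le hN hm).
by rewrite ffactz_nat -bin_ffact PoszM mulrC.
Qed.

Lemma exists_binom x k : coherent p x -> exists c, IsBinom p x k c.
Proof.
move=> hx; pose L n := (n + k`!)%N.
pose P n y := eqmodz (ppow p (L n)) (k`!%:Z * y) (ffactz (x (L n)) k).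
have [||c [hc hP]] := @coherent_choice p P.
- move=> n; have := eqmodz_absz_modz (x (L n)) (ppow_neq0 (L n)).
  set t := absz _ => ht; exists 'C(t, k)%:Z.
  by rewrite /P -ht ffactz_nat -bin_ffact PoszM mulrC.
- move=> n y y' hy hy'; apply: (@eqmodz_ppow_mul2l_nat _ k`!); first exact: fact_gt0.
  have hL : (L n <= L n.+1)%N by rewrite leq_add2r.
  rewrite /P in hy hy'.
  by rewrite hy (eqmodz_ppow_le hL hy') (coherent_le hx hL).
exists c; split=> // n; apply/eqmodzP; rewrite /pmul /pconst.
by rewrite (eqmodz_ppow_le (leq_addr _ n) (hP n)) (coherent_le hx (leq_addr _ n)).
Qed.

Lemma eqmodz_expn_period n l (m1 m2 : nat) : eqmodz p l 1 ->
  eqmodz (ppow p n.-1) m1 m2 -> eqmodz (ppow p n) (l ^+ m1) (l ^+ m2).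
Proof.
case: n => [|n] hl; first by move=> _; apply: eqmodz_ppow0.
wlog le21 : m1 m2 / (m2 <= m1)%N => [hwlog|].
  by case: (leqP m2 m1) => [|/ltnW] h hm; [|symmetry]; apply: hwlog => //; symmetry.
move/eqmodz_nat/eqP; rewrite eqn_mod_dvd // => /dvdnP [t ht].
have hpn : eqmodz (ppow p n.+1) (l ^+ (p ^ n)) 1.
  by rewrite (eqmodz_expp_iter n hl) expr1n.
by rewrite -(subnK le21) ht exprD mulnC exprM hpn expr1n mul1r.
Qed.

Lemma exists_pow l x : coherent p l -> coherent p x ->
  (forall n, (0 < n)%N -> eqmodz p (l n) 1) -> exists u, IsPow p l x u.
Proof.
move=> hl hx hl1; pose r n := absz (x n %% ppow p n)%Z.
have hr n : eqmodz (ppow p n) (r n) (x n) by apply: eqmodz_absz_modz; apply: ppow_neq0.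
have hlr n m : eqmodz (ppow p n.-1) m%:Z (x n.-1) ->
    eqmodz (ppow p n) (l n ^+ m) (l n ^+ r n).
  case: n => [|n] hm; first exact: eqmodz_ppow0.
  apply: eqmodz_expn_period; first exact: hl1.
  by rewrite hm -(coherent_le hx (leqnSn n)) -(eqmodz_ppow_le (leqnSn n) (hr n.+1)).
exists (fun n => l n ^+ r n); split.
  move=> n; apply/eqmodzP; rewrite (coherentS n hl) hlr //.
  have le : (n.-1 <= n.+1)%N := leq_trans (leq_pred n) (leqnSn n).
  by rewrite (eqmodz_ppow_le le (hr n.+1)) (coherent_le hx le).
move=> n; exists n.-1 => m /eqmodzP hm; apply/eqmodzP; exact: hlr.
Qed.

Lemma exists_sum (c : nat -> padic) : (forall k, coherent p (c k)) ->
  (forall n k, (n <= k)%N -> eqmodz (ppow p n) (c k n) 0) -> exists S, IsSum p c S.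
Proof.
move=> hc hc0.
have tail n M : (n <= M)%N ->
    eqmodz (ppow p n) (\sum_(k < M) c k n) (\sum_(k < n) c k n).
  elim: M => [|M IH]; first by rewrite leqn0 => /eqP ->.
  rewrite leq_eqVlt ltnS => /predU1P [-> //|hnM].
  by rewrite big_ord_recr /= hc0 // addr0 IH.
exists (fun n => \sum_(k < n) c k n); split=> [n|n]; last first.
  by exists n => M hM; apply/eqmodzP; apply: tail.
apply/eqmodzP; rewrite -(tail n n.+1) //.
by apply: eqmodz_sum => k _; apply: coherentS.
Qed.

End PrimeModulus.

Lemma size_euler_seq n : size (euler_seq n) = n.+1.
Proof. by elim: n => [|n IH] //=; rewrite size_rcons IH. Qed.

Lemma nth_euler_seq n j : (j <= n)%N -> (euler_seq n)`_j = euler j.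
Proof.
rewrite /euler; elim: n => [|n IH]; first by rewrite leqn0 => /eqP ->.
rewrite leq_eqVlt ltnS => /predU1P [-> //|hj].
by rewrite /= nth_rcons size_euler_seq ltnS hj IH.
Qed.

Lemma eulerS n :
  euler n.+1 = - (\sum_(j < n.+1) 'C(n.+1, j)%:R * euler j) / 2%:R.
Proof.
rewrite {1}/euler /= nth_rcons size_euler_seq ltnn eqxx.
by congr (- _ / _); apply: eq_bigr => j _; rewrite nth_euler_seq // -ltnS.
Qed.

Lemma sum_binom_euler n :
  \sum_(k < n.+1) 'C(n, k)%:R * euler k = (n == 0%N)%:R * 2%:R - euler n.
Proof.
case: n => [|n]; first by rewrite big_ord1 /euler /=.
by rewrite big_ord_recr /= binn eulerS; field.
Qed.

Lemma bin_mul_bin n j k : (k <= j <= n)%N ->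
  ('C(n, j) * 'C(j, k) = 'C(n, k) * 'C(n - k, j - k))%N.
Proof.
case/andP=> hkj hjn; have hkn := leq_trans hkj hjn.
have e1 := bin_fact hkj; have e2 := bin_fact hjn; have e4 := bin_fact hkn.
have e3 := @bin_fact (n - k) (j - k) (leq_sub2r k hjn).
rewrite (_ : n - k - (j - k) = n - j)%N in e3; last by lia.
apply/eqP; rewrite -(@eqn_pmul2r (k`! * (j - k)`! * (n - j)`!)) ?muln_gt0 ?fact_gt0 //.
apply/eqP; transitivity ('C(n, j) * ('C(j, k) * (k`! * (j - k)`!)) * (n - j)`!)%N.
  by ring.
rewrite e1 -mulnA e2 -e4 -e3; ring.
Qed.

Section BinomialConvolution.

Variable R : comNzRingType.

Lemma sum_bin_mul_bin (x y : R) n k : (k <= n)%N ->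
  \sum_(j < n.+1) ('C(n, j) * 'C(j, k))%:R * (x ^+ (j - k) * y ^+ (n - j)) =
  'C(n, k)%:R * (x + y) ^+ (n - k).
Proof.
move=> hkn; rewrite -(big_mkord xpredT
  (fun j => ('C(n, j) * 'C(j, k))%:R * (x ^+ (j - k) * y ^+ (n - j)))).
rewrite (@big_cat_nat _ _ _ k) //= ?leqW // big_nat_cond big1 ?add0r; last first.
  by move=> j /andP [/andP [_ hj] _]; rewrite (bin_small hj) muln0 mul0r.
rewrite (big_addn 0 _ k) subSn // big_mkord addrC exprDn mulr_sumr.
apply: eq_bigr => t _; have ht : (t <= n - k)%N by rewrite -ltnS.
have hj : (k <= t + k <= n)%N by rewrite leq_addl /=; lia.
rewrite bin_mul_bin // addnK (_ : n - (t + k) = n - k - t)%N; last by lia.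
by rewrite natrM -[_ * _ *+ _]mulr_natl; ring.
Qed.

Lemma binomial_convolution (c : nat -> R) x y n :
  \sum_(k < n.+1) 'C(n, k)%:R * c k * (x + y) ^+ (n - k) =
  \sum_(j < n.+1) 'C(n, j)%:R * y ^+ (n - j) *
     \sum_(k < j.+1) 'C(j, k)%:R * c k * x ^+ (j - k).
Proof.
have widen (j : 'I_n.+1) : \sum_(k < j.+1) 'C(j, k)%:R * c k * x ^+ (j - k) =
    \sum_(k < n.+1) 'C(j, k)%:R * c k * x ^+ (j - k).
  rewrite (big_ord_widen n.+1 (fun k => 'C(j, k)%:R * c k * x ^+ (j - k))) //.
  rewrite big_mkcond; apply: eq_bigr => k _; case: ifP => // hk.
  by rewrite bin_small ?mul0r // ltnNge -ltnS hk.
under [RHS]eq_bigr => j _ do rewrite widen mulr_sumr.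
rewrite exchange_big /=; apply: eq_bigr => k _.
rewrite mulrAC -sum_bin_mul_bin; last by rewrite -ltnS.
rewrite mulr_suml; apply: eq_bigr => j _.
by rewrite natrM; ring.
Qed.

End BinomialConvolution.

(* The first term pins down u n because it enters the identity with coefficient 2. *)
Lemma binomial_recursion_uniq (u v : nat -> rat) :
  (forall n, u n + \sum_(j < n.+1) 'C(n, j)%:R * u j = 2%:R) ->
  (forall n, v n + \sum_(j < n.+1) 'C(n, j)%:R * v j = 2%:R) ->
  forall n, u n = v n.
Proof.
move=> hu hv; elim/ltn_ind => n IH.
have e : \sum_(j < n) 'C(n, j)%:R * u j = \sum_(j < n) 'C(n, j)%:R * v j.
  by apply: eq_bigr => j _; rewrite IH.
by have := hu n; have := hv n; rewrite !big_ord_recr /= binn e; lra.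
Qed.

Lemma sum_binom_delta2 n (f : nat -> rat) :
  \sum_(j < n.+1) 'C(n, j)%:R * f j * ((j == 0 :> nat)%:R * 2%:R) = f 0%N * 2%:R.
Proof.
rewrite big_ord_recl big1 ?addr0 /= ?bin0 ?mul1r ?mulr1 // => j _.
by rewrite mul0r mulr0.
Qed.

Lemma sum_binom_signr_euler n : (-1) ^+ n * euler n +
  \sum_(j < n.+1) 'C(n, j)%:R * ((-1) ^+ j * euler j) = 2%:R.
Proof.
have := binomial_convolution (fun k => (-1) ^+ k * euler k) (-1) 1 n.
rewrite addNr big_ord_recr /= subnn expr0 binn mulr1 mul1r big1 ?add0r; last first.
  by move=> k _; rewrite expr0n subn_eq0 leqNgt ltn_ord mulr0.
under eq_bigr => j _.
  under eq_bigr => k _.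
    have sgn : (-1) ^+ j = (-1) ^+ k * (-1) ^+ (j - k) :> rat.
      by rewrite -exprD subnKC //; exact: (ltn_ord k).
    rewrite (_ : _ * _ * _ = (-1) ^+ j * ('C(j, k)%:R * euler k)); last first.
      by rewrite sgn; ring.
    over.
  rewrite -mulr_sumr sum_binom_euler expr1n mulr1.
  over.
move=> ->; rewrite -big_split /=.
rewrite (eq_bigr (fun j : 'I_n.+1 =>
  'C(n, j)%:R * (-1) ^+ j * ((j == 0 :> nat)%:R * 2%:R))); last by move=> j _; ring.
by rewrite sum_binom_delta2 expr0 mul1r.
Qed.

Lemma sum_binom_euler_compl n :
  ((n == 0%N)%:R * 2%:R - euler n) +
  \sum_(j < n.+1) 'C(n, j)%:R * ((j == 0 :> nat)%:R * 2%:R - euler j) = 2%:R.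
Proof.
rewrite (eq_bigr (fun j : 'I_n.+1 => 'C(n, j)%:R * 1 * ((j == 0 :> nat)%:R * 2%:R) -
  'C(n, j)%:R * euler j)); last by move=> j _; ring.
by rewrite sumrB (sum_binom_delta2 n (fun=> 1)) sum_binom_euler; ring.
Qed.

(* E(-t) = 2 - E(t): the Euler numbers of positive even index vanish. *)
Lemma signr_euler n : (-1) ^+ n * euler n = (n == 0%N)%:R * 2%:R - euler n.
Proof.
exact: (binomial_recursion_uniq sum_binom_signr_euler sum_binom_euler_compl).
Qed.

Definition euler_hom (m : nat) (F y : rat) : rat :=
  \sum_(k < m.+1) 'C(m, k)%:R * (euler k * F ^+ k) * y ^+ (m - k).

(* E_m(1 - x) = (-1)^m E_m(x) for the Euler polynomials, in homogeneous form. *)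
Lemma euler_hom_reflect m F y : euler_hom m F (F - y) = (-1) ^+ m * euler_hom m F y.
Proof.
rewrite /euler_hom (binomial_convolution (fun k => euler k * F ^+ k)) mulr_sumr.
apply: eq_bigr => j _.
have hj : (j <= m)%N by rewrite -ltnS.
under eq_bigr => k _.
  rewrite (_ : _ * _ * _ = 'C(j, k)%:R * euler k * F ^+ j); last first.
    by rewrite -!mulrA -exprD subnKC //; exact: (ltn_ord k).
  over.
rewrite -mulr_suml sum_binom_euler -signr_euler (exprNn y).
have sgn : (-1) ^+ m = (-1) ^+ (m - j) * (-1) ^+ j :> rat by rewrite -exprD subnK.
by rewrite sgn; ring.
Qed.

Lemma euler_mul2X_int k : euler k * 2%:R ^+ k \is a Num.int.
Proof.
elim/ltn_ind: k => -[_|k IH]; first by rewrite /euler /= mulr1.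
have -> : euler k.+1 * 2%:R ^+ k.+1 = - \sum_(j < k.+1) 'C(k.+1, j)%:R *
    (euler j * 2%:R ^+ j) * 2%:R ^+ (k - j).
  rewrite eulerS exprS.
  transitivity (- (\sum_(j < k.+1) 'C(k.+1, j)%:R * euler j) * 2%:R ^+ k).
    by field.
  rewrite mulNr mulr_suml; congr (- _); apply: eq_bigr => j _.
  have -> : 2%:R ^+ k = 2%:R ^+ j * 2%:R ^+ (k - j) :> rat.
    by rewrite -exprD subnKC // -ltnS.
  by ring.
rewrite rpredN rpred_sum // => j _.
apply: rpredM; last exact/rpredX/natr_int.
by apply: rpredM; [exact: natr_int | exact: IH].
Qed.

Definition euler2 (k : nat) : int := Num.floor (euler k * 2%:R ^+ k).

Lemma euler2E k : (euler2 k)%:~R = euler k * 2%:R ^+ k.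
Proof. by apply/eqP; rewrite -intrEfloor euler_mul2X_int. Qed.

Lemma euler2_denq k : euler2 k * denq (euler k) = numq (euler k) * 2 ^+ k.
Proof.
by apply: (@intr_inj rat); rewrite !rmorphM /= euler2E numqE rmorphXn /=; ring.
Qed.

Lemma denq_euler_dvdz k : (denq (euler k) %| 2 ^+ k)%Z.
Proof.
have hc : coprimez (denq (euler k)) (numq (euler k)).
  by rewrite coprimezE coprime_sym coprime_num_den.
by rewrite -(Gauss_dvdzr _ hc) -euler2_denq dvdz_mull.
Qed.

Lemma ndvdz2 p : prime p -> odd p -> ~~ (p%:Z %| 2)%Z.
Proof.
move=> pp op; apply/negP; rewrite dvdzE /= => /(@dvdn_leq p 2 isT) hp2.
have p2 : p = 2%N by have := prime_gt1 pp; lia.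
by rewrite p2 in op.
Qed.

Lemma ndvdz_denq_euler p k : prime p -> odd p -> ~~ (p%:Z %| denq (euler k))%Z.
Proof.
move=> pp op; have := ndvdzX pp k (ndvdz2 pp op).
by apply: contra => hd; apply: dvdz_trans hd (denq_euler_dvdz k).
Qed.

Definition euler_homz (m : nat) (F y : int) : int :=
  \sum_(k < m.+1) 'C(m, k)%:R * F ^+ k * y ^+ (m - k) * 2 ^+ (m - k) * euler2 k.

Lemma euler_homzE m F y :
  (euler_homz m F y)%:~R = 2%:R ^+ m * euler_hom m F%:~R y%:~R.
Proof.
rewrite /euler_homz /euler_hom rmorph_sum mulr_sumr; apply: eq_bigr => k _.
rewrite !rmorphM !rmorphXn /= euler2E !rmorph_nat.
have -> : 2%:R ^+ m = 2%:R ^+ k * 2%:R ^+ (m - k) :> rat.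
  by rewrite -exprD subnKC // -ltnS.
by ring.
Qed.

Lemma euler_homz_reflect m F y :
  euler_homz m F (F - y) = (-1) ^+ m * euler_homz m F y.
Proof.
apply: (@intr_inj rat); rewrite rmorphM rmorphXn rmorphN1 !euler_homzE rmorphB /=.
by rewrite euler_hom_reflect euler_homzE; ring.
Qed.

Lemma IsSum_approx p (c : nat -> padic) S (d : nat -> int) n m : IsSum p c S ->
  (forall k, eqmodz (ppow p n) (c k n) (d k)) -> (forall k, (m < k)%N -> d k = 0) ->
  eqmodz (ppow p n) (S n) (\sum_(k < m.+1) d k).
Proof.
move=> [_ hS] hcd hd0; have [K hK] := hS n.
have /eqmodzP <- := hK (maxn K m.+1) (leq_maxl _ _).
suff -> : \sum_(k < m.+1) d k = \sum_(k < maxn K m.+1) d k by exact: eqmodz_sum.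
rewrite (big_ord_widen _ d (leq_maxr K m.+1)) big_mkcond.
by apply: eq_bigr => k _; case: ifPn => //; rewrite -leqNgt => /hd0 ->.
Qed.

Lemma euler_homz_approx d m (F x q : int) (e : nat -> int) :
  eqmodz d (x * q) F -> (forall k, eqmodz d (2 ^+ k * e k) (euler2 k)) ->
  eqmodz d (2 ^+ m * x ^+ m * \sum_(k < m.+1) 'C(m, k)%:R * q ^+ k * e k)
    (euler_homz m F x).
Proof.
move=> hxq he; rewrite mulr_sumr; apply: eqmodz_sum => k _.
have hkm : (k <= m)%N by rewrite -ltnS.
have split_m (z : int) : z ^+ m = z ^+ k * z ^+ (m - k) by rewrite -exprD subnKC.
rewrite (_ : _ * _ = 'C(m, k)%:R * (x * q) ^+ k * x ^+ (m - k) * 2 ^+ (m - k) *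
  (2 ^+ k * e k)); first by rewrite hxq he.
by rewrite exprMn !split_m; ring.
Qed.

Section HFunction.

Variables (p F : nat).
Hypotheses (p_prime : prime p) (p_odd : odd p) (p_dvd_F : (p %| F)%N).

Lemma IsRat_euler_approx k e n :
  IsRat p (euler k) e -> eqmodz (ppow p n) (2 ^+ k * e n) (euler2 k).
Proof.
move=> [_ he]; apply: (eqmodz_ppow_mul2l p_prime (ndvdz_denq_euler k p_prime p_odd)).
have hen := peqP n he; rewrite /pmul /pconst in hen.
by rewrite mulrCA hen mulrC -euler2_denq mulrC.
Qed.

Lemma IsDiv_dvdzX a q n k : coherent p a -> punit p a -> IsDiv p F a q ->
  (n <= k)%N -> (ppow p n %| q n ^+ k)%Z.
Proof.
move=> ha hu [_ hq]; case: n => [_|n hnk]; first by rewrite /ppow expn0 dvd1z.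
have hqn : (p%:Z %| q n.+1)%Z.
  apply/eqmodz0; rewrite -ppow1.
  apply: (eqmodz_ppow_mul2l p_prime (punit_at ha hu (ltn0Sn n))).
  have haq := peqP n.+1 hq; rewrite /pmul /pconst in haq.
  rewrite mulr0 (eqmodz_ppow_le (ltn0Sn n) haq).
  by apply/eqmodz0; rewrite ppow1 dvdzE.
apply: dvdz_trans (dvdz_exp2r k hqn); rewrite /ppow -!natz natrX.
exact: dvdz_exp2l.
Qed.

Lemma IsH_series_approx x a q S (bin e : nat -> padic) n N m :
  coherent p x -> coherent p a -> punit p a -> IsDiv p F a q ->
  (forall k, IsBinom p x k (bin k)) ->
  IsSum p (fun k => pmul (pmul (bin k) (pexp q k)) (e k)) S ->
  (n + n`! <= N)%N -> (m%:Z = x N %[mod ppow p N])%Z ->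
  eqmodz (ppow p n) (S n) (\sum_(k < m.+1) 'C(m, k)%:R * q n ^+ k * e k n).
Proof.
move=> hx ha hu hq hbin hS hN hm.
apply: (IsSum_approx (d := fun k => 'C(m, k)%:R * q n ^+ k * e k n) hS) => k.
  2: by move=> hmk; rewrite bin_small // !mul0r.
rewrite /pmul /pexp; case: (ltnP k n) => hkn.
  have hkN : (n + k`! <= N)%N.
    by apply: leq_trans hN; rewrite leq_add2l leq_fact // ltnW.
  by rewrite (binom_approx p_prime hx (hbin k) hkN hm).
have hqk := IsDiv_dvdzX ha hu hq hkn.
by transitivity (0 : int); [|symmetry]; apply/eqmodz0; rewrite dvdz_mulr // dvdz_mull.
Qed.

Lemma IsH_eval s a h n y : coherent p s -> coherent p a -> punit p a ->
  IsH p s a F h -> eqmodz (ppow p n) (y ^+ p.-1) 1 -> eqmodz p y (a 1%N) ->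
  exists N0, forall N m, (N0 <= N)%N ->
    (m%:Z = psub (pconst 1) s N %[mod ppow p N])%Z ->
    eqmodz (ppow p n) (2 ^+ m * y ^+ m * h n) (euler_homz m F (a n)).
Proof.
move=> hs ha hu [l [u [q [S [bin [e [[w [[hw [hw1 hwa]] [_ hwl]]] [[_ hpow]
  [hq [hbin [he [hS [_ hh]]]]]]]]]]]]] hy hya.
case: n hy => [|n] hy; first by exists 0%N => *; apply: eqmodz_ppow0.
have hx : coherent p (psub (pconst 1) s) by apply: coherent_sub.
have [N1 hN1] := hpow n.+1.
exists (maxn N1 (n.+1 + n.+1`!)) => N m; rewrite geq_max => /andP [hN1N hN] hm.
have hyw : eqmodz (ppow p n.+1) y (w n.+1).
  apply: teich_uniq (peqP n.+1 hw1) _ => //.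
  have /eqmodzP hwa' := hwa; rewrite hya -hwa' -ppow1.
  by symmetry; apply: coherent_le hw (ltn0Sn n).
have hul : eqmodz (ppow p n.+1) (u n.+1) (l n.+1 ^+ m).
  have /eqmodzP hm' := hm; symmetry; apply/eqmodzP/hN1; apply/eqmodzP.
  by rewrite (eqmodz_ppow_le hN1N hm') (coherent_le hx hN1N).
have hwl' := peqP n.+1 hwl; have hh' := peqP n.+1 hh.
rewrite /pmul in hwl' hh'.
rewrite hyw hh' hul (IsH_series_approx hx ha hu hq hbin hS hN hm).
rewrite (_ : _ * _ = 2 ^+ m * (w n.+1 * l n.+1) ^+ m *
   \sum_(k < m.+1) 'C(m, k)%:R * q n.+1 ^+ k * e k n.+1); last by rewrite exprMn; ring.
rewrite hwl'; apply: (@euler_homz_approx _ m F _ _ (fun k => e k n.+1)) => [|k].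
  exact: peqP n.+1 (proj2 hq).
exact: IsRat_euler_approx.
Qed.

Lemma punit_reflect a : punit p a -> punit p (psub (pconst F%:Z) a).
Proof.
by apply: contra => hFa; rewrite -(subKr F%:Z (a 1%N)) rpredB.
Qed.

Lemma teich_opp n y : eqmodz (ppow p n) (y ^+ p.-1) 1 ->
  eqmodz (ppow p n) ((- y) ^+ p.-1) 1.
Proof.
have : odd p.-1.+1 by rewrite prednK ?prime_gt0.
by rewrite /= exprNn -signr_odd => /negbTE ->; rewrite mul1r.
Qed.

Lemma IsH_reflect_peq s a h1 h2 : coherent p s -> coherent p a -> punit p a ->
  IsH p s a F h1 -> IsH p s (psub (pconst F%:Z) a) F h2 -> peq p h1 h2.
Proof.
move=> hs ha hu H1 H2 n; apply/eqmodzP.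
have ha' : coherent p (psub (pconst F%:Z) a) by apply: coherent_sub.
have [y [hy hya]] := teich_approx p_prime n hu.
have [N1 hN1] := IsH_eval hs ha hu H1 hy hya.
(* omega(F - a) = - omega(a) since p | F. *)
have hya' : eqmodz p (- y) (psub (pconst F%:Z) a 1%N).
  rewrite hya /psub /pconst /eqmodz (_ : _ - _ = - F%:Z); last by ring.
  by rewrite rpredN.
have [N2 hN2] := IsH_eval hs ha' (punit_reflect hu) H2 (teich_opp hy) hya'.
pose N := maxn N1 N2; pose m := absz (psub (pconst 1) s N %% ppow p N)%Z.
have /eqmodzP hm : eqmodz (ppow p N) m%:Z (psub (pconst 1) s N).
  exact/eqmodz_absz_modz/ppow_neq0.
have e1 := hN1 N m (leq_maxl _ _) hm; have e2 := hN2 N m (leq_maxr _ _) hm.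
have hc : ~~ (p%:Z %| (-1) ^+ m * 2 ^+ m * y ^+ m)%Z.
  rewrite !ndvdzM ?ndvdzX ?rpredN ?ndvdz1 ?ndvdz2 //.
  by apply: eqmodz_ndvdz hu; symmetry.
apply: (eqmodz_ppow_mul2l p_prime hc).
rewrite (_ : _ * h1 n = (-1) ^+ m * (2 ^+ m * y ^+ m * h1 n)); last by ring.
rewrite (_ : _ * h2 n = 2 ^+ m * (- y) ^+ m * h2 n); last by rewrite (exprNn y); ring.
by rewrite e1 e2 /psub /pconst euler_homz_reflect.
Qed.

Lemma exists_angle a : coherent p a -> punit p a ->
  exists2 l, IsAngle p a l & forall n, (0 < n)%N -> eqmodz p (l n) 1.
Proof.
move=> ha hu; have [w hw] := exists_teich p_prime ha hu.
have [hwc [_ /eqmodzP hwa]] := hw.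
have hwu : punit p w by apply: eqmodz_ndvdz hu; symmetry.
have [l [hlc hwl]] := exists_div p_prime hwc ha hwu.
exists l => [|n n0]; first by exists w.
rewrite -ppow1; apply: (eqmodz_ppow_mul2l p_prime (punit_at hwc hwu n0)).
have hwln := peqP n hwl; rewrite /pmul in hwln.
rewrite mulr1 (eqmodz_ppow_le n0 hwln) (coherent_le ha n0) ppow1 -hwa -ppow1.
by symmetry; apply: coherent_le hwc n0.
Qed.

Lemma exists_H s a : coherent p s -> coherent p a -> punit p a ->
  exists h, IsH p s a F h.
Proof.
move=> hs ha hu; have [l hl hl1] := exists_angle ha hu.
have hlc : coherent p l by case: hl => w [_ []].
have hx : coherent p (psub (pconst 1) s) by apply: coherent_sub.
have [u hpow] := exists_pow p_prime hlc hx hl1.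
have [q hq] := exists_div p_prime ha (coherent_const p F%:Z) hu.
have [bin hbin] := ClassicalEpsilon.choice _ (fun k => exists_binom p_prime k hx).
have [e he] := ClassicalEpsilon.choice (fun k => IsRat p (euler k)) (fun k =>
  exists_div p_prime (coherent_const _ _) (coherent_const _ _)
    (ndvdz_denq_euler k p_prime p_odd)).
pose c k := pmul (pmul (bin k) (pexp q k)) (e k).
have [S hS] : exists S, IsSum p c S.
  apply: exists_sum => [k|n k hnk].
    case: (hbin k) (hq) (he k) => hbk _ [hqc _] [hek _].
    by apply: coherent_mul => //; apply: coherent_mul => //; apply: coherent_exp.
  apply/eqmodz0; rewrite /c /pmul /pexp dvdz_mulr // dvdz_mull //.
  exact: IsDiv_dvdzX ha hu hq hnk.
have hSc : coherent p S by case: hS.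
exists (pmul u S), l, u, q, S, bin, e; do 6 (split=> //).
split; [by apply: coherent_mul => //; case: hpow | by move=> n].
Qed.

End HFunction.

Lemma IsH_coherent p s a F h : IsH p s a F h -> coherent p h.
Proof. by case=> l [u [q [S [bin [e [_ [_ [_ [_ [_ [_ []]]]]]]]]]]]. Qed.

Lemma IsH_peq p s a F h h' : IsH p s a F h' -> coherent p h -> peq p h h' ->
  IsH p s a F h.
Proof.
case=> l [u [q [S [bin [e [? [? [? [? [? [? [_ hh']]]]]]]]]]]] hh hhh'.
exists l, u, q, S, bin, e; do 7 (split=> //).
by move=> n; apply/eqmodzP; rewrite (peqP n hhh') (peqP n hh').
Qed.

Theorem proposition3p10 (p F : nat) (s a : padic) :
  prime p -> odd p -> (0 < F)%N -> (p %| F)%N ->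
  coherent p s -> coherent p a -> punit p a ->
  (exists h, IsH p s a F h /\ IsH p s (psub (pconst F%:Z) a) F h) /\
  (forall h1 h2, IsH p s a F h1 -> IsH p s (psub (pconst F%:Z) a) F h2 ->
     peq p h1 h2).
Proof.
move=> pp op _ pF hs ha hu.
have ha' : coherent p (psub (pconst F%:Z) a) by apply: coherent_sub.
have reflect_peq := IsH_reflect_peq pp op pF hs ha hu.
split; last exact: reflect_peq.
have [h hH] := exists_H pp op pF hs ha hu.
have [h' hH'] := exists_H pp op pF hs ha' (punit_reflect pF hu).
exists h; split=> //.
exact: IsH_peq hH' (IsH_coherent hH) (reflect_peq _ _ hH hH').
Qed.
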